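(* A countably infinite graph $G$ is HE-homogeneous if and only if it is HH-homogeneous and the following two conditions hold: (1) $\mathcal{H}(G)\cap\overline{\mathcal{H}}(G)=\varnothing$; (2) $\mathcal{H}(G)$ is downward-closed in $(\mathrm{Age}(G),\preceq)$ (equivalently, $\overline{\mathcal{H}}(G)$ is upward-closed in $(\mathrm{Age}(G),\preceq)$).
   Context: All graphs are undirected and loopless; subgraphs are induced. A homomorphism maps adjacent vertices to adjacent vertices. $G$ is HH-homogeneous (resp. HE-homogeneous) if every homomorphism between finite induced subgraphs of $G$ is the restriction of an endomorphism (resp. surjective endomorphism) of $G$. $\mathrm{Age}(G)$ is the class of (isomorphism types of) finite graphs embeddable in $G$ as induced subgraphs. A co-cone over a finite $X\subseteq G$ is a vertex $v\in G\setminus X$ adjacent to no vertex of $X$. $\mathcal H(G)$ is the set of $A\in\mathrm{Age}(G)$ for which there is an embedding $e:A\to G$ such that $G$ contains a co-cone over $e[A]$; $\overline{\mathcal H}(G)$ is the set of $A\in\mathrm{Age}(G)$ for which there is an embedding $e:A\to G$ such that no vertex of $G\setminus e[A]$ is a co-cone over $e[A]$. For $A,B\in\mathrm{Age}(G)$, $A\preceq B$ means there is a surjective homomorphism $A\to B$. A subset $X$ is downward-closed if $x\in X$ and $y\preceq x$ imply $y\in X$, and upward-closed if $y\in X$ and $y\preceq x$ imply $x\in X$. *)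

From Stdlib Require Import List.
From mathcomp Require Import all_boot.
Set Implicit Arguments. Unset Strict Implicit. Unset Printing Implicit Defensive.

Definition simple_graph (V : Type) (E : V -> V -> Prop) : Prop :=
  (forall x y, E x y -> E y x) /\ (forall x, ~ E x x).

Definition surj (A B : Type) (f : A -> B) : Prop := forall b, exists a, f a = b.

Definition countably_infinite (V : Type) : Prop :=
  exists f : nat -> V, bijective f.

(* A homomorphism between finite induced subgraphs of G: a finite set X of
   vertices (given as a list) and a map h (only its values on X matter)
   sending adjacent vertices of X to adjacent vertices. The codomain induced
   subgraph can be taken to be the (finite) image of h. *)
Definition local_hom (V : Type) (E : V -> V -> Prop) (X : list V) (h : V -> V) :=
  forall x y, In x X -> In y X -> E x y -> E (h x) (h y).

Definition endomorphism (V : Type) (E : V -> V -> Prop) (F : V -> V) :=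
  forall x y, E x y -> E (F x) (F y).

Definition HH_homogeneous (V : Type) (E : V -> V -> Prop) : Prop :=
  forall (X : list V) (h : V -> V), local_hom E X h ->
    exists F : V -> V, endomorphism E F /\ (forall x, In x X -> F x = h x).

Definition HE_homogeneous (V : Type) (E : V -> V -> Prop) : Prop :=
  forall (X : list V) (h : V -> V), local_hom E X h ->
    exists F : V -> V, endomorphism E F /\ surj F /\
      (forall x, In x X -> F x = h x).

(* Finite graphs (representatives of isomorphism types) on 'I_n. *)
Record fin_graph : Type := FGraph { fg_n : nat; fg_adj : 'I_fg_n -> 'I_fg_n -> bool }.
Arguments fg_adj f _ _ : clear implicits.

Definition embedding (V : Type) (E : V -> V -> Prop) (A : fin_graph)
  (e : 'I_(fg_n A) -> V) : Prop :=
  injective e /\ (forall i j, fg_adj A i j <-> E (e i) (e j)).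

Arguments embedding [V] E A e.

Definition in_Age (V : Type) (E : V -> V -> Prop) (A : fin_graph) : Prop :=
  exists e, embedding E A e.

Definition cocone (V : Type) (E : V -> V -> Prop) (A : fin_graph)
  (e : 'I_(fg_n A) -> V) (v : V) : Prop :=
  (forall i, v <> e i) /\ (forall i, ~ E v (e i)).

Definition in_H (V : Type) (E : V -> V -> Prop) (A : fin_graph) : Prop :=
  in_Age E A /\ exists e, embedding E A e /\ exists v, cocone E e v.

Definition in_Hbar (V : Type) (E : V -> V -> Prop) (A : fin_graph) : Prop :=
  in_Age E A /\ exists e, embedding E A e /\ forall v, ~ cocone E e v.

Definition fg_hom (A B : fin_graph) (f : 'I_(fg_n A) -> 'I_(fg_n B)) : Prop :=
  forall i j, fg_adj A i j -> fg_adj B (f i) (f j).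

Definition fg_preceq (A B : fin_graph) : Prop :=
  exists f : 'I_(fg_n A) -> 'I_(fg_n B), fg_hom f /\ surj f.

Definition downward_closed_in_Age (V : Type) (E : V -> V -> Prop)
  (P : fin_graph -> Prop) : Prop :=
  forall A B, in_Age E A -> in_Age E B -> P A -> fg_preceq B A -> P B.

(* (=>) Let e embed B in G and let g : B -> G be a homomorphism whose image has
   a co-cone v. A surjective endomorphism F extending e i |-> g i maps some w
   onto v, and w is then a co-cone over the image of e. With g another embedding
   this gives (1); with g = e' o f for a surjection f : B -> A and an embedding
   e' of A with a co-cone, it gives (2).
   (<=) By (1) and (2), a finite S that maps homomorphically onto a set with a
   co-cone has a co-cone itself. Let p be a finite partial homomorphism and y a
   vertex outside its image; we look for x outside dom p whose neighbours map to
   neighbours of y, so that p + (x |-> y) is still a homomorphism. Let B be the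
   set of d in dom p with p d not adjacent to y, and L a maximal independent
   subset of dom p without edges to B. Mapping L to a single p d0 (d0 in B) and
   B by p, y becomes a co-cone over the image of B ++ L, so B ++ L has a co-cone
   x, and maximality of L puts x outside dom p (if B is empty, any vertex
   outside dom p will do). Alternating this back step with the forth step
   given by HH-homogeneity along an enumeration of G yields a surjective
   endomorphism. *)

From Stdlib Require Import List Classical ClassicalEpsilon Lia.
From mathcomp Require Import all_boot zify.
Set Implicit Arguments. Unset Strict Implicit. Unset Printing Implicit Defensive.

Definition classicb (P : Prop) : bool :=
  if excluded_middle_informative P then true else false.

Lemma classicbP (P : Prop) : classicb P <-> P.
Proof. by rewrite /classicb; case: excluded_middle_informative. Qed.

Lemma In_mem (T : eqType) (x : T) (s : seq T) : x \in s -> In x s.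
Proof.
by elim: s => //= y s IH; rewrite in_cons => /orP [/eqP ->|/IH]; [left|right].
Qed.

Lemma injective_factor (A B C : Type) (e : A -> B) (g : A -> C) (c : C) :
  injective e -> exists h : B -> C, forall a, h (e a) = g a.
Proof.
move=> e_inj.
have [h Hh] : exists h : B -> C, forall b a, e a = b -> h b = g a.
  apply: (choice (fun b z => forall a, e a = b -> z = g a)) => b.
  case: (classic (exists a, e a = b)) => [[a ea]|no_a].
  - by exists (g a) => a' ea'; rewrite (e_inj a' a) // ea ea'.
  - by exists c => a ea; case: no_a; exists a.
by exists h => a; apply: Hh.
Qed.

Lemma countably_infinite_fresh (V : Type) (L : list V) :
  countably_infinite V -> exists x, ~ In x L.
Proof.
case=> f [g fK gK]; set m := list_max (List.map g L).
exists (f m.+1) => /(in_map g); rewrite fK => Hm.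
have /Forall_forall/(_ _ Hm) := proj1 (list_max_le (List.map g L) m) (le_n m).
lia.
Qed.

Section ListVertices.
Variables (V : Type) (v0 : V) (L : list V).

Definition nth_vertex (i : 'I_(length L)) : V := List.nth i L v0.

Lemma nth_vertex_In i : In (nth_vertex i) L.
Proof. by apply: nth_In; apply/ltP; apply: ltn_ord. Qed.

Lemma In_nth_vertex x : In x L -> exists i, nth_vertex i = x.
Proof.
by case/(In_nth _ _ v0) => k [/ltP k_lt <-]; exists (Ordinal k_lt).
Qed.

Lemma nth_vertex_inj : NoDup L -> injective nth_vertex.
Proof.
move=> L_uniq i j eq_ij; apply: val_inj.
by apply: (proj1 (NoDup_nth L v0) L_uniq) eq_ij; apply/ltP; apply: ltn_ord.
Qed.

End ListVertices.
Arguments nth_vertex [V] v0 L i.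

Section InducedGraph.
Variables (V : Type) (E : V -> V -> Prop).

Definition list_cocone (S : list V) (w : V) : Prop :=
  forall s, In s S -> w <> s /\ ~ E w s.

Definition induced_graph (v0 : V) (L : list V) : fin_graph :=
  @FGraph (length L) (fun i j => classicb (E (nth_vertex v0 L i) (nth_vertex v0 L j))).

Lemma induced_embedding v0 L :
  NoDup L -> embedding E (induced_graph v0 L) (nth_vertex v0 L).
Proof. by move=> L_uniq; split=> [|i j]; [apply: nth_vertex_inj | apply: classicbP]. Qed.

Lemma cocone_nth_vertex v0 L w :
  cocone E (A := induced_graph v0 L) (nth_vertex v0 L) w <-> list_cocone L w.
Proof.
split=> [[neq nadj] x /(In_nth_vertex v0) [i <-] | Lw]; first by [].
by split=> i; have [] := Lw _ (nth_vertex_In v0 i).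
Qed.

Lemma in_H_induced v0 L w :
  NoDup L -> list_cocone L w -> in_H E (induced_graph v0 L).
Proof.
move=> /(induced_embedding v0) emb Lw; split; first by exists (nth_vertex v0 L).
by exists (nth_vertex v0 L); split=> //; exists w; apply/cocone_nth_vertex.
Qed.

Lemma induced_preceq v0 S T (q : V -> V) :
  NoDup T -> local_hom E S q -> (forall t, In t T <-> exists2 s, In s S & q s = t) ->
  fg_preceq (induced_graph v0 S) (induced_graph v0 T).
Proof.
move=> T_uniq q_hom memT.
have [f Hf] : exists f : 'I_(length S) -> 'I_(length T),
    forall i, nth_vertex v0 T (f i) = q (nth_vertex v0 S i).
  apply: (choice (fun i j => nth_vertex v0 T j = q (nth_vertex v0 S i))) => i.
  by apply/In_nth_vertex/memT; exists (nth_vertex v0 S i); first exact: nth_vertex_In.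
exists f; split=> [i j /classicbP Eij | j].
  by apply/classicbP; rewrite (Hf i) (Hf j); apply: q_hom => //; apply: nth_vertex_In.
have [s /(In_nth_vertex v0) [i <-] qs] := proj1 (memT _) (nth_vertex_In v0 j).
by exists i; apply: (nth_vertex_inj (v0 := v0) T_uniq); rewrite Hf.
Qed.

End InducedGraph.

Section CoconePullback.
Variables (V : Type) (E : V -> V -> Prop).
Hypothesis H_Hbar_disjoint : forall A : fin_graph, ~ (in_H E A /\ in_Hbar E A).
Hypothesis H_downward : downward_closed_in_Age E (in_H E).

Lemma in_H_cocone A e : in_H E A -> embedding E A e -> exists v, cocone E e v.
Proof.
move=> A_H e_emb; apply: NNPP => no_cocone; apply: (H_Hbar_disjoint (A := A)).
split=> //; split; first by exists e.
by exists e; split=> // v e_v; apply: no_cocone; exists v.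
Qed.

Lemma list_cocone_pullback S q w :
  local_hom E S q -> list_cocone E (List.map q S) w -> exists x, list_cocone E S x.
Proof.
move=> q_hom qS_w.
pose eq_dec (x y : V) := excluded_middle_informative (x = y).
set S' := nodup eq_dec S; set T := nodup eq_dec (List.map q S').
have S'_uniq : NoDup S' := NoDup_nodup _ S.
have T_uniq : NoDup T := NoDup_nodup _ _.
have memS' s : In s S' <-> In s S := nodup_In _ S s.
have memT t : In t T <-> exists2 s, In s S' & q s = t.
  by rewrite nodup_In in_map_iff; split=> [[s [<- S's]]|[s S's <-]]; exists s.
have T_H : in_H E (induced_graph E w T).
  apply: (in_H_induced _ T_uniq) => t /memT [s /memS' Ss <-].
  by apply: qS_w; apply: in_map.
have S'_H : in_H E (induced_graph E w S').
  apply: (H_downward _ _ T_H); [exists (nth_vertex w T) | exists (nth_vertex w S') |].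
  - exact: induced_embedding.
  - exact: induced_embedding.
  by apply: induced_preceq T_uniq _ memT => a b /memS' Sa /memS' Sb; apply: q_hom.
have [x /cocone_nth_vertex S'x] := in_H_cocone S'_H (induced_embedding E w S'_uniq).
by exists x => s /memS'; apply: S'x.
Qed.

End CoconePullback.

Section HEConsequences.
Variables (V : Type) (E : V -> V -> Prop).
Hypothesis HE : HE_homogeneous E.

Lemma HE_HH : HH_homogeneous E.
Proof. by move=> X h /HE [F [F_endo [_ F_ext]]]; exists F. Qed.

Lemma HE_cocone_pullback B eB (g : 'I_(fg_n B) -> V) v :
  embedding E B eB -> (forall i j, fg_adj B i j -> E (g i) (g j)) ->
  cocone E g v -> exists w, cocone E eB w.
Proof.
move=> [eB_inj eB_adj] g_hom [v_neq v_nadj].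
have [h h_eB] : exists h, forall i, h (eB i) = g i := injective_factor g v eB_inj.
set X := List.map eB (enum 'I_(fg_n B)).
have X_eB i : In (eB i) X by apply/in_map/In_mem; rewrite mem_enum.
have h_hom : local_hom E X h.
  move=> _ _ /in_map_iff [i [<- _]] /in_map_iff [j [<- _]] /eB_adj Eij.
  by rewrite !h_eB; apply: g_hom.
have [F [F_endo [F_surj F_ext]]] := HE h_hom.
have [w Fw] := F_surj v.
have F_eB i : F (eB i) = g i by rewrite F_ext // h_eB.
exists w; split=> i; first by move=> w_eq; apply: (v_neq i); rewrite -Fw w_eq.
by move=> /F_endo; rewrite Fw F_eB; apply: v_nadj.
Qed.

Lemma HE_Hbar_disjoint A : ~ (in_H E A /\ in_Hbar E A).
Proof.
move=> [[_ [e1 [[_ e1_adj] [v e1_v]]]] [_ [e2 [e2_emb e2_none]]]].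
have [w e2_w] := HE_cocone_pullback e2_emb (fun i j => proj1 (e1_adj i j)) e1_v.
exact: e2_none e2_w.
Qed.

Lemma HE_H_downward : downward_closed_in_Age E (in_H E).
Proof.
move=> A B _ [eB eB_emb] [_ [eA [[_ eA_adj] [v eA_v]]]] [f [f_hom _]].
split; first by exists eB.
exists eB; split=> //; apply: (HE_cocone_pullback (g := eA \o f) (v := v)) => //.
  by move=> i j /f_hom /eA_adj.
by case: eA_v => v_neq v_nadj; split=> i; [apply: v_neq | apply: v_nadj].
Qed.

End HEConsequences.

Definition update (V : Type) (p : V -> V) (x y : V) : V -> V :=
  fun z => if excluded_middle_informative (z = x) then y else p z.

Section BackStep.
Variables (V : Type) (E : V -> V -> Prop).
Hypothesis HG : simple_graph E.
Hypothesis H_Hbar_disjoint : forall A : fin_graph, ~ (in_H E A /\ in_Hbar E A).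
Hypothesis H_downward : downward_closed_in_Age E (in_H E).

Lemma local_hom_cons D p x y :
  ~ In x D -> local_hom E D p -> (forall d, In d D -> E x d -> E y (p d)) ->
  local_hom E (x :: D) (update p x y).
Proof.
case: HG => E_sym E_irr x_new p_hom x_adj a b Ha Hb Eab; rewrite /update.
case: excluded_middle_informative => ax; case: excluded_middle_informative => bx.
- by case: (E_irr x); move: Eab; rewrite ax bx.
- by apply: x_adj; [case: Hb => // /esym | rewrite -ax].
- by apply/E_sym/x_adj; [case: Ha => // /esym | apply/E_sym; rewrite -bx].
- by apply: p_hom => //; [case: Ha => // /esym | case: Hb => // /esym].
Qed.

Section BackVertex.
Variables (D : list V) (p : V -> V) (y d0 : V).
Hypothesis p_hom : local_hom E D p.
Hypothesis y_new : forall d, In d D -> p d <> y.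
Hypothesis d0_D : In d0 D.
Hypothesis y_d0 : ~ E y (p d0).

Let B := List.filter (fun d => ~~ classicb (E y (p d))) D.

Let mem_B b : In b B <-> In b D /\ ~ E y (p b).
Proof.
rewrite filter_In; split=> [[Db /negP yb]|[Db yb]]; split=> //.
  by move=> /classicbP.
by apply/negP=> /classicbP.
Qed.

Definition back_vertex x := ~ In x D /\ forall d, In d D -> E x d -> E y (p d).

Definition sparse L :=
  NoDup L /\ incl L D /\ forall l s, In l L -> In s (B ++ L) -> ~ E l s.

Lemma sparse_grow L :
  sparse L -> (exists x, back_vertex x) \/ exists x, sparse (x :: L).
Proof.
case: HG => E_sym E_irr [L_uniq [L_D L_sparse]].
have [q [q_L q_nL]] : exists q : V -> V,
    (forall z, In z L -> q z = p d0) /\ (forall z, ~ In z L -> q z = p z).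
  exists (fun z => if excluded_middle_informative (In z L) then p d0 else p z).
  by split=> z zL; case: excluded_middle_informative.
have q_hom : local_hom E (B ++ L) q.
  move=> a b BLa BLb Eab.
  case: (classic (In a L)) => aL; first by case: (L_sparse a b aL BLb).
  case: (classic (In b L)) => bL; first by case: (L_sparse b a bL BLa (E_sym _ _ Eab)).
  have memD c : In c (B ++ L) -> ~ In c L -> In c D.
    by move=> /in_app_iff [/(mem_B c) [] | cL /(_ cL)].
  by rewrite !q_nL //; apply: p_hom => //; apply: memD.
have y_cocone : list_cocone E (List.map q (B ++ L)) y.
  move=> _ /in_map_iff [s [<- BLs]].
  case: (classic (In s L)) => sL; first by rewrite q_L //; split=> // /esym; apply: y_new.
  have [Ds ys] : In s D /\ ~ E y (p s) by apply/mem_B; case/in_app_iff: BLs.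
  by rewrite q_nL //; split=> // /esym; apply: y_new.
have [x x_cocone] := list_cocone_pullback H_Hbar_disjoint H_downward q_hom y_cocone.
have x_nadj s : In s B \/ In s L -> ~ E x s by move=> /in_app_iff /x_cocone [].
case: (classic (In x D)) => Dx; [right; exists x | left; exists x].
- split; [|split].
  + by constructor=> // xL; case: (x_cocone x); first by apply/in_app_iff; right.
  + by move=> z [<-|/L_D].
  + move=> l s [<-|lL] /in_app_iff [Bs|[<-|Ls]]; try exact: E_irr.
    * by apply: x_nadj; left.
    * by apply: x_nadj; right.
    * by apply: L_sparse => //; apply/in_app_iff; left.
    * by move=> /E_sym; apply: x_nadj; right.
    * by apply: L_sparse => //; apply/in_app_iff; right.
- split=> // d Dd Exd; apply: NNPP => yd.
  by apply: (x_nadj d) => //; left; apply/mem_B.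
Qed.

Lemma back_vertex_exists : exists x, back_vertex x.
Proof.
suff grow k L : sparse L -> length D - length L <= k -> exists x, back_vertex x.
  apply: (grow (length D) nil); last by rewrite /= subn0.
  by split; [constructor | split].
elim: k L => [|k IH] L L_sparse len_L; case: (sparse_grow L_sparse) => [//|[x xL_sparse]].
- have [xL_uniq [xL_D _]] := xL_sparse.
  have /= := NoDup_incl_length xL_uniq xL_D; lia.
- by apply: (IH _ xL_sparse) => /=; lia.
Qed.

End BackVertex.

Hypothesis Hcount : countably_infinite V.

Lemma back_vertex_of_unmapped D p y :
  local_hom E D p -> (forall d, In d D -> p d <> y) -> exists x, back_vertex D p y x.
Proof.
move=> p_hom y_new.
case: (classic (exists d0, In d0 D /\ ~ E y (p d0))) => [[d0 [Dd0 yd0]] | y_adj].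
  exact: back_vertex_exists p_hom y_new Dd0 yd0.
have [x xD] := countably_infinite_fresh D Hcount.
exists x; split=> // d Dd _; apply: NNPP => yd.
by apply: y_adj; exists d.
Qed.

End BackStep.

Section PartialHoms.
Variables (V : Type) (E : V -> V -> Prop).

Record partial_hom := PartialHom {
  pdom : list V;
  pfun : V -> V;
  pfun_hom : local_hom E pdom pfun }.
Arguments pfun_hom : clear implicits.

Definition extends (P Q : partial_hom) : Prop :=
  incl (pdom P) (pdom Q) /\ forall x, In x (pdom P) -> pfun Q x = pfun P x.

Lemma extends_refl P : extends P P.
Proof. by split. Qed.

Lemma extends_trans P Q R : extends P Q -> extends Q R -> extends P R.
Proof.
move=> [PQ_dom PQ_fun] [QR_dom QR_fun]; split=> [x /PQ_dom /QR_dom //| x Px].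
by rewrite QR_fun ?PQ_fun //; apply: PQ_dom.
Qed.

Lemma forth_step (HH : HH_homogeneous E) P v :
  exists2 Q, extends P Q & In v (pdom Q).
Proof.
have [F [F_endo F_ext]] := HH _ _ (pfun_hom P).
have F_hom : local_hom E (v :: pdom P) F by move=> x y _ _; apply: F_endo.
exists (PartialHom F_hom); last by left.
by split=> x Px; [right | apply: F_ext].
Qed.

Lemma back_step (HG : simple_graph E) (Hcount : countably_infinite V)
    (H_Hbar_disjoint : forall A : fin_graph, ~ (in_H E A /\ in_Hbar E A))
    (H_downward : downward_closed_in_Age E (in_H E)) P y :
  exists2 Q, extends P Q & exists2 x, In x (pdom Q) & pfun Q x = y.
Proof.
case: (classic (exists2 x, In x (pdom P) & pfun P x = y)) => [y_img | y_new].
  by exists P; first exact: extends_refl.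
have [x [x_new x_adj]] : exists x, back_vertex E (pdom P) (pfun P) y x.
  apply: (back_vertex_of_unmapped HG H_Hbar_disjoint H_downward Hcount (pfun_hom P)).
  by move=> d Pd Pdy; apply: y_new; exists d.
have xP_hom := local_hom_cons HG x_new (pfun_hom P) x_adj.
exists (PartialHom xP_hom).
  split=> [z Pz | z Pz /=]; first by right.
  by rewrite /update; case: excluded_middle_informative => // zx; case: x_new; rewrite -zx.
by exists x; [left | rewrite /= /update; case: excluded_middle_informative].
Qed.

End PartialHoms.

Section BackAndForth.
Variables (V : Type) (E : V -> V -> Prop).

Section Chain.
Variable next : partial_hom E -> V -> partial_hom E.
Hypothesis next_extends : forall P v, extends P (next P v).
Hypothesis next_dom : forall P v, In v (pdom (next P v)).
Hypothesis next_img : forall P v, exists2 x, In x (pdom (next P v)) & pfun (next P v) x = v.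
Variables (f : nat -> V) (g : V -> nat).
Hypothesis gK : cancel g f.
Variable P0 : partial_hom E.

Fixpoint chain n := if n is m.+1 then next (chain m) (f m) else P0.

Lemma chain_extends m n : m <= n -> extends (chain m) (chain n).
Proof.
move/subnKC <-; elim: (n - m) => [|k IH]; first by rewrite addn0; apply: extends_refl.
by rewrite addnS; apply: extends_trans IH (next_extends _ _).
Qed.

Lemma chain_agree m n x :
  In x (pdom (chain m)) -> In x (pdom (chain n)) -> pfun (chain m) x = pfun (chain n) x.
Proof.
wlog mn : m n / m <= n.
  by move=> agree; case/orP: (leq_total m n) => [|nm] xm xn; last symmetry; apply: agree.
by move=> xm _; rewrite (proj2 (chain_extends mn) x xm).
Qed.

Lemma chain_dom x : In x (pdom (chain (g x).+1)).
Proof. by rewrite -{1}[x]gK; apply: next_dom. Qed.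

Definition chain_limit x := pfun (chain (g x).+1) x.

Lemma chain_limitE n x : In x (pdom (chain n)) -> chain_limit x = pfun (chain n) x.
Proof. exact: chain_agree (chain_dom x). Qed.

Lemma chain_limit_endo : endomorphism E chain_limit.
Proof.
move=> x y Exy; set n := maxn (g x).+1 (g y).+1.
have x_n : In x (pdom (chain n)).
  by apply: (proj1 (chain_extends (leq_maxl _ _))); apply: chain_dom.
have y_n : In y (pdom (chain n)).
  by apply: (proj1 (chain_extends (leq_maxr _ _))); apply: chain_dom.
by rewrite (chain_limitE x_n) (chain_limitE y_n); apply: pfun_hom.
Qed.

Lemma chain_limit_surj : surj chain_limit.
Proof.
move=> y; have [x x_dom xy] := next_img (chain (g y)) (f (g y)).
by exists x; rewrite (chain_limitE (n := (g y).+1)) // xy gK.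
Qed.

End Chain.

Lemma back_and_forth (Hcount : countably_infinite V)
    (step : forall (P : partial_hom E) v, exists Q,
       extends P Q /\ In v (pdom Q) /\ exists2 x, In x (pdom Q) & pfun Q x = v)
    (P : partial_hom E) :
  exists F, endomorphism E F /\ surj F /\ forall x, In x (pdom P) -> F x = pfun P x.
Proof.
have [f [g _ gK]] := Hcount.
have [next next_spec] := choice _ (fun Pv : partial_hom E * V => step Pv.1 Pv.2).
pose next' Q v := next (Q, v).
have next_extends Q v : extends Q (next' Q v) by case: (next_spec (Q, v)).
have next_dom Q v : In v (pdom (next' Q v)) by case: (next_spec (Q, v)) => _ [].
have next_img Q v : exists2 x, In x (pdom (next' Q v)) & pfun (next' Q v) x = v.
  by case: (next_spec (Q, v)) => _ [].
exists (chain_limit next' f g P); split; [|split].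
- exact: chain_limit_endo.
- exact: chain_limit_surj.
- move=> x Px; exact: (chain_limitE next_extends next_dom gK (n := 0) Px).
Qed.

End BackAndForth.

Lemma HE_of_HH (V : Type) (E : V -> V -> Prop) :
  simple_graph E -> countably_infinite V -> HH_homogeneous E ->
  (forall A : fin_graph, ~ (in_H E A /\ in_Hbar E A)) ->
  downward_closed_in_Age E (in_H E) -> HE_homogeneous E.
Proof.
move=> HG Hcount HH H_Hbar_disjoint H_downward X h h_hom.
apply: (back_and_forth Hcount _ (PartialHom h_hom)) => P v.
have [Q PQ vQ] := forth_step HH P v.
have [R QR [x xR xv]] := back_step HG Hcount H_Hbar_disjoint H_downward Q v.
exists R; split; first exact: extends_trans PQ QR.
by split; [apply: (proj1 QR) | exists x].
Qed.

Theorem proposition5p8 (V : Type) (E : V -> V -> Prop)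
  (HG : simple_graph E) (Hcount : countably_infinite V) :
  HE_homogeneous E <->
  (HH_homogeneous E /\
   (forall A : fin_graph, ~ (in_H E A /\ in_Hbar E A)) /\
   downward_closed_in_Age E (in_H E)).
Proof.
split=> [HE | [HH [H_Hbar_disjoint H_downward]]].
  by split; [exact: HE_HH | split; [exact: HE_Hbar_disjoint | exact: HE_H_downward]].
exact: HE_of_HH.
Qed.
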